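(* Let $M$ be a DFA with $n$ states. Then ${\rm fact}(L(M))$ can be accepted by a DFA with at most $2^{n-1}$ states, and this bound is tight: for every $n\ge1$ there exists a DFA $M$ with $n$ states such that the minimal DFA accepting ${\rm fact}(L(M))$ has exactly $2^{n-1}$ states.
   Context: DFAs are complete (one initial state, a total transition function $Q\times\Sigma\to Q$); the minimal DFA of a regular language is the complete DFA with fewest states accepting it. ${\rm fact}(L)$ is the set of all factors (contiguous subwords) of words in $L$. *)

From mathcomp Require Import all_boot.
Set Implicit Arguments. Unset Strict Implicit. Unset Printing Implicit Defensive.

Record dfa (Sigma : finType) := DFA {
  state : finType;
  init : state;
  delta : state -> Sigma -> state;
  final : pred state }.

Definition delta_star (Sigma : finType) (M : dfa Sigma) (q : state M) (w : seq Sigma)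
  : state M := foldl (@delta Sigma M) q w.

Definition language (Sigma : finType) := seq Sigma -> Prop.

Definition lang (Sigma : finType) (M : dfa Sigma) : language Sigma :=
  fun w => @final Sigma M (delta_star (@init Sigma M) w).

Definition fact (Sigma : finType) (L : language Sigma) : language Sigma :=
  fun w => exists u v, L (u ++ w ++ v).

Definition accepts (Sigma : finType) (M : dfa Sigma) (L : language Sigma) : Prop :=
  forall w, lang M w <-> L w.

Definition minimal_dfa_size (Sigma : finType) (L : language Sigma) (k : nat) : Prop :=
  (exists M : dfa Sigma, accepts M L /\ #|state M| = k) /\
  (forall M : dfa Sigma, accepts M L -> k <= #|state M|).

From mathcomp Require Import all_boot.
From Stdlib Require Import ClassicalEpsilon.
Set Implicit Arguments. Unset Strict Implicit. Unset Printing Implicit Defensive.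

(* Upper bound: a word is a factor of L(M) iff it leads some useful
   (reachable and co-reachable) state to a useful state.  A subset
   construction over the useful states, started from all of them, therefore
   accepts fact(L(M)).  If every state is useful, fact(L(M)) is the set of all
   words; otherwise at most n - 1 states are useful, giving 2^(n-1) subsets.

   Lower bound: take as alphabet all maps on {0, ..., n-1}, with 0 a dead
   state and n-1 initial.  For a set S of live states, the letter keep_set S
   fixes S and kills the rest, and keep_one x keeps only x.  The two-letter
   word (keep_set S) (keep_one x) is a factor iff x is in S, so in any DFA
   for the factors the states reached by reading keep_set S are pairwise
   distinct for the 2^(n-1) sets S. *)

Lemma delta_star_cons (Sigma : finType) (M : dfa Sigma) (q : state M) a w :
  delta_star q (a :: w) = delta_star (delta q a) w.
Proof. by []. Qed.

Lemma delta_star_cat (Sigma : finType) (M : dfa Sigma) (q : state M) u w :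
  delta_star q (u ++ w) = delta_star (delta_star q u) w.
Proof. exact: foldl_cat. Qed.

Lemma accepts_delta_star_eq (Sigma : finType) (M : dfa Sigma) L u u' w :
  accepts M L -> delta_star (init M) u = delta_star (init M) u' ->
  L (u ++ w) -> L (u' ++ w).
Proof.
move=> acc e /acc; rewrite /lang !delta_star_cat e => h.
by apply/acc; rewrite /lang delta_star_cat.
Qed.

Section FactorAutomaton.
Variables (Sigma : finType) (M : dfa Sigma).

Definition reachable (q : state M) := exists u, delta_star (init M) u = q.
Definition coreachable (q : state M) := exists v, final (delta_star q v).

Definition useful (q : state M) : bool :=
  if excluded_middle_informative (reachable q /\ coreachable q) then true else false.

Lemma usefulP q : reflect (reachable q /\ coreachable q) (useful q).
Proof. by rewrite /useful; case: excluded_middle_informative; constructor. Qed.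

Lemma useful_delta_star_cat q u w :
  useful q -> useful (delta_star q (u ++ w)) -> useful (delta_star q u).
Proof.
move=> /usefulP [[x hx] _] /usefulP [_ [v hv]]; apply/usefulP; split.
  by exists (x ++ u); rewrite delta_star_cat hx.
by exists (w ++ v); move: hv; rewrite !delta_star_cat.
Qed.

Definition useful_state : finType := {q : state M | useful q}.

Lemma fact_lang_useful w :
  fact (lang M) w <->
  exists p q : useful_state, delta_star (val q) w = val p.
Proof.
split.
  case=> u [v]; rewrite /lang !delta_star_cat => hf.
  set q := delta_star (init M) u; set p := delta_star q w.
  have uq : useful q.
    by apply/usefulP; split; [exists u | exists (w ++ v); rewrite delta_star_cat].
  have up : useful p.
    by apply/usefulP; split; [exists (u ++ w); rewrite delta_star_cat | exists v].
  by exists (Sub p up), (Sub q uq); rewrite !SubK.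
case=> p [q e]; move: (valP q) (valP p) => /usefulP [[u hu] _] /usefulP [_ [v hv]].
by exists u, v; rewrite /lang !delta_star_cat hu e.
Qed.

Definition factor_step (T : {set useful_state}) (a : Sigma) : {set useful_state} :=
  [set p | [exists q in T, delta (val q) a == val p]].

Definition factor_dfa : dfa Sigma :=
  @DFA Sigma {set useful_state} [set: useful_state] factor_step (fun T => T != set0).

Lemma mem_factor_delta_star w T p :
  p \in @delta_star _ factor_dfa T w <->
  exists2 q, q \in T & delta_star (val q) w = val p.
Proof.
elim: w T => [|a w IH] T.
  by split=> [pT | [q qT /val_inj <-]]; first exists p.
rewrite delta_star_cons IH; split.
  case=> r; rewrite inE => /exists_inP [q qT /eqP e] <-.
  by exists q; rewrite // delta_star_cons e.
case=> q qT e.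
have ur : useful (delta (val q) a).
  by apply: (@useful_delta_star_cat _ [:: a] w); rewrite ?e; apply: valP.
exists (Sub _ ur); last by rewrite SubK -delta_star_cons.
by rewrite inE; apply/exists_inP; exists q; rewrite ?SubK.
Qed.

Lemma accepts_factor_dfa : accepts factor_dfa (fact (lang M)).
Proof.
move=> w; rewrite fact_lang_useful; split.
  by case/set0Pn=> p /mem_factor_delta_star [q _ e]; exists p, q.
by case=> p [q e]; apply/set0Pn; exists p; apply/mem_factor_delta_star; exists q.
Qed.

Definition total_dfa : dfa Sigma := @DFA Sigma unit tt (fun _ _ => tt) predT.

Lemma accepts_total_dfa_fact :
  (forall q, useful q) -> accepts total_dfa (fact (lang M)).
Proof.
move=> all_useful w; split=> // _.
have [_ [v hv]] := usefulP _ (all_useful (delta_star (init M) w)).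
by exists [::], v; rewrite /lang /= delta_star_cat.
Qed.

Lemma fact_dfa_upper_bound : exists M' : dfa Sigma,
  accepts M' (fact (lang M)) /\ #|state M'| <= 2 ^ (#|state M| - 1).
Proof.
have [all_useful | /forallPn [q0 q0_useless]] := boolP [forall q, useful q].
  exists total_dfa; split; last by rewrite card_unit expn_gt0.
  by apply: accepts_total_dfa_fact => q; apply: (forallP all_useful).
exists factor_dfa; split; first exact: accepts_factor_dfa.
rewrite /= -cardsT -powersetT card_powerset cardsT leq_pexp2l // card_sig.
rewrite -(cardC [pred q | useful q]) -addnBA ?leq_addr //.
by apply/card_gt0P; exists q0; rewrite !inE.
Qed.

End FactorAutomaton.

Section WitnessAutomaton.
Variable m : nat.

Definition witness_letter : finType := {ffun 'I_m.+1 -> 'I_m.+1}.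

Definition witness_delta (q : 'I_m.+1) (f : witness_letter) : 'I_m.+1 :=
  if q == ord0 then ord0 else f q.

Definition witness_dfa : dfa witness_letter :=
  @DFA witness_letter 'I_m.+1 ord_max witness_delta (fun q => q != ord0).

Definition keep_set (S : {set 'I_m.+1}) : witness_letter :=
  [ffun q => if q \in S then q else ord0].

Definition keep_one (x : 'I_m.+1) : witness_letter :=
  [ffun q => if q == x then x else ord0].

Lemma witness_dead_state v : @delta_star _ witness_dfa ord0 v = ord0.
Proof. by elim: v => //= a v IH; rewrite /witness_delta eqxx. Qed.

Lemma witness_keep_set_one q S x :
  @delta_star _ witness_dfa q [:: keep_set S; keep_one x] =
  if [&& q != ord0, q \in S & q == x] then x else ord0.
Proof.
rewrite /= /witness_delta; have [-> | nq] := eqVneq q ord0; first by rewrite eqxx.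
by rewrite ffunE; case: (q \in S); rewrite /= ?eqxx // (negbTE nq) ffunE.
Qed.

Lemma fact_witness_keep S x : x != ord0 ->
  fact (lang witness_dfa) [:: keep_set S; keep_one x] <-> x \in S.
Proof.
move=> nx; split.
  case=> u [v]; rewrite /lang !delta_star_cat witness_keep_set_one.
  case: and3P => [[_ qS /eqP <-] // | _].
  by rewrite witness_dead_state.
move=> xS; exists [:: [ffun _ => x]], [::].
have nm : (ord_max : 'I_m.+1) != ord0.
  by rewrite -(inj_eq val_inj) /= -lt0n; apply: leq_trans (leq_ord x); rewrite lt0n.
rewrite /lang cats0 delta_star_cat.
have -> : delta_star (init witness_dfa) [:: [ffun _ => x]] = x.
  by rewrite /= /witness_delta (negbTE nm) ffunE.
by rewrite witness_keep_set_one nx xS eqxx.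
Qed.

Lemma witness_fact_lower_bound (M' : dfa witness_letter) :
  accepts M' (fact (lang witness_dfa)) -> 2 ^ m <= #|state M'|.
Proof.
move=> acc.
pose after_keep (S : {set 'I_m.+1}) := delta_star (init M') [:: keep_set S].
have inj : {in powerset [set~ ord0] &, injective after_keep}.
  move=> S T; rewrite !powersetE => /subsetP sS /subsetP sT e.
  apply/setP => x; have [-> | nx] := eqVneq x ord0.
    by apply/idP/idP => [/sS | /sT]; rewrite !inE eqxx.
  apply/idP/idP; rewrite -!(fact_witness_keep _ nx).
    exact: (@accepts_delta_star_eq _ _ _ [:: keep_set S] [:: keep_set T] [:: keep_one x]).
  exact: (@accepts_delta_star_eq _ _ _ [:: keep_set T] [:: keep_set S] [:: keep_one x]).
by have := @leq_card_in _ _ after_keep _ inj; rewrite card_powerset cardsC1 card_ord.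
Qed.

End WitnessAutomaton.

Theorem mainTheorem14 :
  (forall (Sigma : finType) (M : dfa Sigma),
      exists M' : dfa Sigma,
        accepts M' (fact (lang M)) /\ #|state M'| <= 2 ^ (#|state M| - 1)) /\
  (forall n : nat, 1 <= n ->
      exists (Sigma : finType) (M : dfa Sigma),
        #|state M| = n /\ minimal_dfa_size (fact (lang M)) (2 ^ (n - 1))).
Proof.
split; first exact: fact_dfa_upper_bound.
case=> [|m] // _; exists (witness_letter m), (witness_dfa m).
have card_witness : #|state (witness_dfa m)| = m.+1 by rewrite card_ord.
rewrite card_witness subn1; split=> //; split; last exact: witness_fact_lower_bound.
have [M' [acc le]] := fact_dfa_upper_bound (witness_dfa m).
rewrite card_witness subn1 /= in le.
by exists M'; split=> //; apply/eqP; rewrite eqn_leq le witness_fact_lower_bound.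
Qed.
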